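(* Let $\mu>0$, $u_a\in\mathbb{R}$, $\alpha_\pm\ge0$, $u_-<u_+$, with Riemann data $(\alpha_0,u_0)=(\alpha_-,u_-)$ for $x<0$, $(\alpha_+,u_+)$ for $x>0$. With $u_l(t)=u_a+(u_--u_a)e^{-\mu t}$, $u_r(t)=u_a+(u_+-u_a)e^{-\mu t}$, $X_1(t)=u_at+\frac{(u_a-u_-)(e^{-\mu t}-1)}{\mu}$, $X_2(t)=u_at+\frac{(u_a-u_+)(e^{-\mu t}-1)}{\mu}$, $\overline u(x,t)=u_a+\frac{\mu(x-u_at)}{e^{\mu t}-1}$, the function $(\alpha,u)=(\alpha_-,u_l(t))$ for $x<X_1(t)$, $(0,\overline u)$ for $X_1(t)\le x\le X_2(t)$, $(\alpha_+,u_r(t))$ for $x>X_2(t)$ is a weak solution of the Eulerian droplet model with these data (a two-contact-discontinuity containing a vacuum state).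
   Context: The Eulerian droplet model: $\partial_t\alpha+\partial_x(\alpha u)=0$, $\partial_t(\alpha u)+\partial_x(\alpha u^2)=\mu\alpha(u_a-u)$. Weak solution: for all $\psi\in\mathcal{C}_0^\infty(\mathbb{R}\times[0,\infty))$, $\int_0^\infty\int(\alpha\psi_t+\alpha u\psi_x)dx\,dt=-\int\alpha_0\psi(x,0)dx$ and $\int_0^\infty\int(\alpha u\psi_t+\alpha u^2\psi_x+\mu\alpha(u_a-u)\psi)dx\,dt=-\int\alpha_0u_0\psi(x,0)dx$. *)

From Stdlib Require Import Reals Lra.
Open Scope R_scope.

Definition partial_x (f g : R -> R -> R) : Prop :=
  forall x t, derivable_pt_lim (fun y => f y t) x (g x t).

Definition partial_t (f g : R -> R -> R) : Prop :=
  forall x t, derivable_pt_lim (fun s => f x s) t (g x t).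

Definition continuous2 (f : R -> R -> R) : Prop :=
  forall x t eps, 0 < eps -> exists del, 0 < del /\
    forall y s, Rabs (y - x) < del -> Rabs (s - t) < del ->
      Rabs (f y s - f x t) < eps.

Definition smooth2 (f : R -> R -> R) : Prop :=
  exists D : nat -> nat -> R -> R -> R,
    D 0%nat 0%nat = f /\
    (forall i j, partial_x (D i j) (D (S i) j)) /\
    (forall i j, partial_t (D i j) (D i (S j))) /\
    (forall i j, continuous2 (D i j)).

(* psi restricted to R x [0,oo) has compact support. *)
Definition support_bounded_by (psi : R -> R -> R) (M : R) : Prop :=
  forall x t, (M <= Rabs x \/ M <= t) -> psi x t = 0.

(* Test functions in C_0^oo(R x [0,oo)): restrictions of smooth functions on R^2
   whose support meets R x [0,oo) in a compact set. *)
Definition test_function (psi : R -> R -> R) : Prop :=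
  smooth2 psi /\ exists M, 0 < M /\ support_bounded_by psi M.

Definition has_int (f : R -> R) (a b v : R) : Prop :=
  exists pr : Riemann_integrable f a b, RiemannInt pr = v.

Definition has_iint (F : R -> R -> R) (M v : R) : Prop :=
  exists G : R -> R,
    (forall t, 0 <= t <= M -> has_int (fun x => F x t) (- M) M (G t)) /\
    has_int G 0 M v.

(* Weak solution of the Eulerian droplet model
     d_t alpha + d_x (alpha u) = 0,
     d_t (alpha u) + d_x (alpha u^2) = mu alpha (ua - u),
   with data (alpha0, u0).  Since psi vanishes outside [-M,M] x (-oo,M),
   the integrals over R x [0,oo) and R reduce to those over [-M,M] x [0,M]
   and [-M,M]. *)
Definition weak_solution (mu ua : R) (alpha u : R -> R -> R)
  (alpha0 u0 : R -> R) : Prop :=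
  forall psi psix psit : R -> R -> R,
    test_function psi -> partial_x psi psix -> partial_t psi psit ->
    forall M, 0 < M -> support_bounded_by psi M ->
      (exists I1,
         has_int (fun x => alpha0 x * psi x 0) (- M) M I1 /\
         has_iint (fun x t => alpha x t * psit x t
                              + alpha x t * u x t * psix x t) M (- I1)) /\
      (exists I2,
         has_int (fun x => alpha0 x * u0 x * psi x 0) (- M) M I2 /\
         has_iint (fun x t => alpha x t * u x t * psit x t
                              + alpha x t * (u x t) ^ 2 * psix x t
                              + mu * alpha x t * (ua - u x t) * psi x t) M (- I2)).

Definition riemann_data (vm vp : R) (x : R) : R :=
  if Rlt_dec x 0 then vm else vp.

Definition u_side (mu ua u0 t : R) : R := ua + (u0 - ua) * exp (- mu * t).

Definition X_curve (mu ua u0 t : R) : R :=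
  ua * t + (ua - u0) * (exp (- mu * t) - 1) / mu.

Definition ubar (mu ua x t : R) : R := ua + mu * (x - ua * t) / (exp (mu * t) - 1).

Definition sol_alpha (mu ua am ap um up : R) (x t : R) : R :=
  if Rlt_dec x (X_curve mu ua um t) then am
  else if Rle_dec x (X_curve mu ua up t) then 0
  else ap.

Definition sol_u (mu ua am ap um up : R) (x t : R) : R :=
  if Rlt_dec x (X_curve mu ua um t) then u_side mu ua um t
  else if Rle_dec x (X_curve mu ua up t) then ubar mu ua x t
  else u_side mu ua up t.

From Stdlib Require Import Reals Lra FunctionalExtensionality.
From Coquelicot Require Import Coquelicot.
Open Scope R_scope.

(* At each time t the vacuum [X1(t), X2(t)] contributes nothing, and on either
   side of it the state (alpha, u) is constant in x while the front moves with
   the gas velocity: X1' = u_l, X2' = u_r, and u_l' = mu (ua - u_l).  Reynolds'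
   transport theorem therefore identifies the x-integral of the mass (resp.
   momentum) integrand over each side as the time derivative of
   alpha * int psi (resp. alpha * u * int psi) over that side.  Integrating in
   t up to the support bound of psi leaves minus the integral of the data,
   since X1(0) = X2(0) = 0 and u_l(0) = u_-, u_r(0) = u_+. *)

Lemma has_int_of_is_RInt (f : R -> R) a b v : is_RInt f a b v -> has_int f a b v.
Proof.
  intros H. assert (E : ex_RInt f a b) by (exists v; exact H).
  exists (ex_RInt_Reals_0 f a b E). rewrite <- RInt_Reals. now apply is_RInt_unique.
Qed.

Lemma is_RInt_zero_inside (f : R -> R) a b :
  (forall x, Rmin a b < x < Rmax a b -> f x = 0) -> is_RInt f a b 0.
Proof.
  intros H. apply is_RInt_ext with (fun _ => 0).
  - intros x Hx; symmetry; auto.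
  - pose proof (is_RInt_const (V := R_NormedModule) a b 0) as H0.
    set (z := scal _ _) in H0. replace z with 0 in H0; [exact H0|apply sym_eq, Rmult_0_r].
Qed.

Lemma is_RInt_gap (f g h : R -> R) a b c d l1 l2 :
  a <= b -> b <= c -> c <= d ->
  (forall x, a < x < b -> f x = g x) -> (forall x, b < x < c -> f x = 0) ->
  (forall x, c < x < d -> f x = h x) ->
  is_RInt g a b l1 -> is_RInt h c d l2 -> is_RInt f a d (l1 + l2).
Proof.
  intros Hab Hbc Hcd Hg H0 Hh Ig Ih.
  replace (l1 + l2) with (l1 + 0 + l2) by ring.
  apply (is_RInt_Chasles f a c d); [apply (is_RInt_Chasles f a b c)|].
  - apply is_RInt_ext with g; [|exact Ig].
    intros x Hx. rewrite Rmin_left, Rmax_right in Hx by lra. symmetry; auto.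
  - apply is_RInt_zero_inside.
    intros x Hx. rewrite Rmin_left, Rmax_right in Hx by lra. auto.
  - apply is_RInt_ext with h; [|exact Ih].
    intros x Hx. rewrite Rmin_left, Rmax_right in Hx by lra. symmetry; auto.
Qed.

Lemma is_RInt_shrink (h : R -> R) M K v : 0 < M <= K ->
  (forall x, M < Rabs x -> h x = 0) -> is_RInt h (- K) K v -> is_RInt h (- M) M v.
Proof.
  intros HMK Hz H.
  assert (E : ex_RInt h (- M) M).
  { apply (ex_RInt_Chasles_2 (V := R_CompleteNormedModule)) with (- K); [lra|].
    apply (ex_RInt_Chasles_1 (V := R_CompleteNormedModule)) with K; [lra|].
    exists v; exact H. }
  pose proof (RInt_correct (V := R_CompleteNormedModule) _ _ _ E) as HE.
  assert (Hl : is_RInt h (- K) (- M) 0).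
  { apply is_RInt_zero_inside. intros x Hx. rewrite Rmin_left, Rmax_right in Hx by lra.
    apply Hz. rewrite Rabs_left by lra. lra. }
  assert (Hr : is_RInt h M K 0).
  { apply is_RInt_zero_inside. intros x Hx. rewrite Rmin_left, Rmax_right in Hx by lra.
    apply Hz. rewrite Rabs_right by lra. lra. }
  pose proof (is_RInt_Chasles h _ _ _ _ _ (is_RInt_Chasles h _ _ _ _ _ Hl HE) Hr) as Hw.
  pose proof (is_RInt_unique _ _ _ _ Hw) as Uw.
  change (RInt h (- K) K = 0 + RInt h (- M) M + 0) in Uw.
  rewrite Rplus_0_l, Rplus_0_r, (is_RInt_unique _ _ _ _ H) in Uw.
  rewrite Uw. exact HE.
Qed.

Lemma continuous2_fst (F : R -> R -> R) t x :
  continuous2 F -> continuity_pt (fun y => F y t) x.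
Proof.
  intros H eps Heps. destruct (H x t eps Heps) as [d [Hd Hd']].
  exists d; split; auto. intros y [_ Hy]. unfold R_dist in *.
  apply Hd'; auto. rewrite Rminus_eq_0, Rabs_R0; auto.
Qed.

Lemma continuous2_along (F : R -> R -> R) (b : R -> R) t :
  continuous2 F -> continuity_pt b t -> continuity_pt (fun s => F (b s) s) t.
Proof.
  intros H Hb eps Heps. destruct (H (b t) t eps Heps) as [d [Hd Hd']].
  destruct (Hb d Hd) as [d2 [Hd2 Hd2']].
  exists (Rmin d d2); split; [apply Rmin_pos; auto|].
  intros s [_ Hs]. simpl in *. unfold R_dist in *. apply Hd'.
  - destruct (Req_dec s t) as [->|Hst]; [rewrite Rminus_eq_0, Rabs_R0; auto|].
    apply Hd2'. split; [split; [exact I|auto]|].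
    eapply Rlt_le_trans; [exact Hs|apply Rmin_r].
  - eapply Rlt_le_trans; [exact Hs|apply Rmin_l].
Qed.

Lemma continuity_2d_pt_continuous2 (F : R -> R -> R) s x :
  continuous2 F -> continuity_2d_pt (fun u v => F v u) s x.
Proof.
  intros H eps. destruct (H x s eps (cond_pos eps)) as [d [Hd Hd']].
  exists (mkposreal d Hd). intros u v Hu Hv. apply Hd'; auto.
Qed.

Lemma ex_RInt_continuous2 (F : R -> R -> R) t a b :
  continuous2 F -> ex_RInt (fun x => F x t) a b.
Proof.
  intros H. apply (ex_RInt_continuous (V := R_CompleteNormedModule)).
  intros z _. apply continuity_pt_filterlim, continuous2_fst, H.
Qed.

Lemma is_RInt_continuous2 (F : R -> R -> R) t a b :
  continuous2 F -> is_RInt (fun x => F x t) a b (RInt (fun x => F x t) a b).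
Proof.
  intros H. apply (RInt_correct (V := R_CompleteNormedModule)), ex_RInt_continuous2, H.
Qed.

Lemma is_RInt_partial_x (F Fx : R -> R -> R) t a b :
  continuous2 Fx -> partial_x F Fx -> is_RInt (fun x => Fx x t) a b (F b t - F a t).
Proof.
  intros Hc Hp. apply (is_RInt_derive (V := R_CompleteNormedModule) (fun x => F x t)).
  - intros x _. apply is_derive_Reals, Hp.
  - intros x _. apply continuity_pt_filterlim, continuous2_fst, Hc.
Qed.

Lemma partial_x_unique (F G G' : R -> R -> R) : partial_x F G -> partial_x F G' -> G = G'.
Proof.
  intros H H'. extensionality x; extensionality t.
  exact (uniqueness_limite _ _ _ _ (H x t) (H' x t)).
Qed.

Lemma partial_t_unique (F G G' : R -> R -> R) : partial_t F G -> partial_t F G' -> G = G'.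
Proof.
  intros H H'. extensionality x; extensionality t.
  exact (uniqueness_limite _ _ _ _ (H x t) (H' x t)).
Qed.

Lemma smooth2_regularity (psi psix psit : R -> R -> R) :
  smooth2 psi -> partial_x psi psix -> partial_t psi psit ->
  continuous2 psi /\ continuous2 psix /\ continuous2 psit /\
  exists psitt, partial_t psit psitt /\ continuous2 psitt.
Proof.
  intros [D [HD0 [HDx [HDt HDc]]]] Hx Ht.
  assert (Ex : psix = D 1%nat 0%nat) by (apply (partial_x_unique psi); [|rewrite <- HD0]; auto).
  assert (Et : psit = D 0%nat 1%nat) by (apply (partial_t_unique psi); [|rewrite <- HD0]; auto).
  subst psix psit. rewrite <- HD0.
  repeat split; auto. exists (D 0%nat 2%nat). auto.
Qed.

Lemma derivable_pt_lim_locally_zero (f : R -> R) x l :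
  locally x (fun y => f y = 0) -> derivable_pt_lim f x l -> l = 0.
Proof.
  intros Hz Hd. apply is_derive_Reals in Hd.
  apply (is_derive_ext_loc f (fun _ => 0)) in Hd; [|exact Hz].
  rewrite <- (is_derive_unique _ _ _ Hd). apply Derive_const.
Qed.

Lemma continuity_pt_of_is_derive (f : R -> R) t l : is_derive f t l -> continuity_pt f t.
Proof.
  intros H. apply continuity_pt_filterlim.
  apply (ex_derive_continuous (K := R_AbsRing) (V := R_NormedModule)). exists l; exact H.
Qed.

Lemma is_RInt_derive_everywhere (F f : R -> R) a b :
  (forall t, is_derive F t (f t)) -> (forall t, continuity_pt f t) -> is_RInt f a b (F b - F a).
Proof.
  intros HF Hf. apply (is_RInt_derive (V := R_CompleteNormedModule) F f a b).
  - intros; apply HF.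
  - intros; apply continuity_pt_filterlim, Hf.
Qed.

Lemma is_derive_RInt_moving_bounds (F Ft : R -> R -> R) (a b : R -> R) (da db t : R) :
  continuous2 F -> continuous2 Ft -> partial_t F Ft ->
  is_derive a t da -> is_derive b t db ->
  is_derive (fun s => RInt (fun x => F x s) (a s) (b s)) t
    (RInt (fun x => Ft x t) (a t) (b t) - F (a t) t * da + F (b t) t * db).
Proof.
  intros HF HFt Hp Ha Hb.
  assert (DE : forall x s, Derive (fun z => F x z) s = Ft x s).
  { intros x s. apply is_derive_unique, is_derive_Reals, Hp. }
  assert (C2 : forall s x, continuity_2d_pt (fun u v => Derive (fun z => F v z) u) s x).
  { intros s x eps. destruct (continuity_2d_pt_continuous2 Ft s x HFt eps) as [d Hd].
    exists d. intros u v Hu Hv. rewrite !DE. apply Hd; auto. }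
  replace (RInt (fun x => Ft x t) (a t) (b t))
    with (RInt (fun x => Derive (fun s => F x s) t) (a t) (b t))
    by (apply RInt_ext; intros; apply DE).
  unfold Rminus. rewrite Ropp_mult_distr_l.
  apply (is_derive_RInt_param_bound_comp (fun s x => F x s) a b t da db); auto.
  - apply filter_forall; intros; apply ex_RInt_continuous2, HF.
  - exists (mkposreal 1 Rlt_0_1). apply filter_forall; intros; apply ex_RInt_continuous2, HF.
  - exists (mkposreal 1 Rlt_0_1). apply filter_forall; intros; apply ex_RInt_continuous2, HF.
  - exists (mkposreal 1 Rlt_0_1). apply filter_forall; intros y x _.
    exists (Ft x y). apply is_derive_Reals, Hp.
  - exists (mkposreal 1 Rlt_0_1). intros; apply C2.
  - exists (mkposreal 1 Rlt_0_1). intros; apply C2.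
  - apply continuous2_fst, HF.
  - apply continuous2_fst, HF.
Qed.

Section Transport.

Variables psi psix psit psitt : R -> R -> R.
Hypotheses (psi_cont : continuous2 psi) (psix_cont : continuous2 psix)
  (psit_cont : continuous2 psit) (psitt_cont : continuous2 psitt)
  (psi_x : partial_x psi psix) (psi_t : partial_t psi psit) (psit_t : partial_t psit psitt).

Definition window_int (a b : R -> R) (t : R) : R := RInt (fun x => psi x t) (a t) (b t).

Definition window_rate (v a b : R -> R) (t : R) : R :=
  RInt (fun x => psit x t) (a t) (b t) + v t * (psi (b t) t - psi (a t) t).

Lemma is_RInt_window_rate (v a b : R -> R) t :
  is_RInt (fun x => psit x t + v t * psix x t) (a t) (b t) (window_rate v a b t).
Proof.
  apply (is_RInt_plus (V := R_NormedModule)).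
  - apply is_RInt_continuous2, psit_cont.
  - apply (is_RInt_scal (V := R_NormedModule)), is_RInt_partial_x; auto.
Qed.

Variables v dv a da b db : R -> R.
Hypotheses (v_deriv : forall t, is_derive v t (dv t)) (dv_cont : forall t, continuity_pt dv t)
  (a_deriv : forall t, is_derive a t (da t)) (b_deriv : forall t, is_derive b t (db t)).
(* Each end of the window either moves with speed v or sits where psi vanishes. *)
Hypotheses (a_transported : forall t, psi (a t) t * (da t - v t) = 0)
  (b_transported : forall t, psi (b t) t * (db t - v t) = 0).

Lemma is_derive_window_int t : is_derive (window_int a b) t (window_rate v a b t).
Proof.
  replace (window_rate v a b t)
    with (RInt (fun x => psit x t) (a t) (b t) - psi (a t) t * da t + psi (b t) t * db t).
  - apply is_derive_RInt_moving_bounds; auto.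
  - unfold window_rate. pose proof (a_transported t). pose proof (b_transported t). nra.
Qed.

Lemma continuity_window_rate t : continuity_pt (window_rate v a b) t.
Proof.
  pose proof (continuity_pt_of_is_derive _ _ _ (a_deriv t)).
  pose proof (continuity_pt_of_is_derive _ _ _ (b_deriv t)).
  apply continuity_pt_plus; [|apply continuity_pt_mult; [|apply continuity_pt_minus]].
  - eapply continuity_pt_of_is_derive, (is_derive_RInt_moving_bounds psit psitt); auto.
  - eapply continuity_pt_of_is_derive, v_deriv.
  - apply continuous2_along; auto.
  - apply continuous2_along; auto.
Qed.

Lemma is_RInt_window_rate_time t0 t1 :
  is_RInt (window_rate v a b) t0 t1 (window_int a b t1 - window_int a b t0).
Proof.
  apply is_RInt_derive_everywhere; [apply is_derive_window_int|apply continuity_window_rate].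
Qed.

Lemma is_RInt_window_momentum_time t0 t1 :
  is_RInt (fun t => dv t * window_int a b t + v t * window_rate v a b t) t0 t1
    (v t1 * window_int a b t1 - v t0 * window_int a b t0).
Proof.
  apply (is_RInt_derive_everywhere (fun t => v t * window_int a b t)).
  - intros t. apply (is_derive_mult (K := R_AbsRing)); auto using is_derive_window_int, Rmult_comm.
  - intros t. apply continuity_pt_plus; apply continuity_pt_mult; auto using continuity_window_rate.
    + eapply continuity_pt_of_is_derive, is_derive_window_int.
    + eapply continuity_pt_of_is_derive, v_deriv.
Qed.

End Transport.

Section Solution.

Variables mu ua am ap um up : R.
Hypotheses (Hmu : 0 < mu) (Hu : um < up).

Lemma is_derive_X_curve u0 t : is_derive (X_curve mu ua u0) t (u_side mu ua u0 t).
Proof. unfold X_curve, u_side. auto_derive; auto. field. lra. Qed.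

Lemma is_derive_u_side u0 t : is_derive (u_side mu ua u0) t (mu * (ua - u_side mu ua u0 t)).
Proof. unfold u_side. auto_derive; auto. ring. Qed.

Lemma continuity_u_side_rate u0 t : continuity_pt (fun s => mu * (ua - u_side mu ua u0 s)) t.
Proof.
  apply continuity_pt_scal, continuity_pt_minus.
  - apply continuity_pt_const. intros ? ?; reflexivity.
  - eapply continuity_pt_of_is_derive, is_derive_u_side.
Qed.

Lemma X_curve_0 u0 : X_curve mu ua u0 0 = 0.
Proof. unfold X_curve. rewrite !Rmult_0_r, exp_0. unfold Rdiv. ring. Qed.

Lemma u_side_0 u0 : u_side mu ua u0 0 = u0.
Proof. unfold u_side. rewrite Rmult_0_r, exp_0. ring. Qed.

Lemma exp_decay_bounds t : 0 <= t -> 0 < exp (- mu * t) <= 1.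
Proof.
  intros Ht. split; [apply exp_pos|]. rewrite <- exp_0.
  destruct (Rle_lt_or_eq_dec _ _ Ht) as [Hpos|<-].
  - left. apply exp_increasing. nra.
  - rewrite Rmult_0_r. right; reflexivity.
Qed.

Lemma Rabs_X_curve_le u0 t T : 0 <= t <= T ->
  Rabs (X_curve mu ua u0 t) <= Rabs ua * T + Rabs (ua - u0) / mu.
Proof.
  intros Ht. pose proof (exp_decay_bounds t (proj1 Ht)) as He.
  unfold X_curve, Rdiv. eapply Rle_trans; [apply Rabs_triang|].
  rewrite !Rabs_mult, Rabs_inv, (Rabs_right t), (Rabs_right mu), (Rabs_left1 (_ - 1)) by lra.
  pose proof (Rinv_0_lt_compat mu Hmu).
  apply Rplus_le_compat.
  - apply Rmult_le_compat_l; [apply Rabs_pos|lra].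
  - apply Rmult_le_compat_r; [lra|].
    rewrite <- (Rmult_1_r (Rabs (ua - u0))) at 2.
    apply Rmult_le_compat_l; [apply Rabs_pos|lra].
Qed.

Lemma X_curve_le t : 0 <= t -> X_curve mu ua um t <= X_curve mu ua up t.
Proof.
  intros Ht. pose proof (exp_decay_bounds t Ht) as He. pose proof (Rinv_0_lt_compat mu Hmu).
  assert (0 <= (up - um) * (1 - exp (- mu * t)) * / mu) by (apply Rmult_le_pos; nra).
  unfold X_curve, Rdiv. lra.
Qed.

Lemma sol_left x t : x < X_curve mu ua um t ->
  sol_alpha mu ua am ap um up x t = am /\ sol_u mu ua am ap um up x t = u_side mu ua um t.
Proof. intros H. unfold sol_alpha, sol_u. destruct (Rlt_dec _ _); [auto|contradiction]. Qed.

Lemma sol_vacuum x t : X_curve mu ua um t <= x <= X_curve mu ua up t ->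
  sol_alpha mu ua am ap um up x t = 0.
Proof.
  intros H. unfold sol_alpha.
  destruct (Rlt_dec _ _); [lra|]. destruct (Rle_dec _ _); [auto|lra].
Qed.

Lemma sol_right x t : 0 <= t -> X_curve mu ua up t < x ->
  sol_alpha mu ua am ap um up x t = ap /\ sol_u mu ua am ap um up x t = u_side mu ua up t.
Proof.
  intros Ht H. pose proof (X_curve_le t Ht). unfold sol_alpha, sol_u.
  destruct (Rlt_dec _ _); [lra|]. destruct (Rle_dec _ _); [lra|auto].
Qed.

Lemma riemann_data_mult a b c d x :
  riemann_data a b x * riemann_data c d x = riemann_data (a * c) (b * d) x.
Proof. unfold riemann_data. destruct (Rlt_dec x 0); reflexivity. Qed.

Section WeakForm.

Variables psi psix psit psitt : R -> R -> R.
Hypotheses (psi_cont : continuous2 psi) (psix_cont : continuous2 psix)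
  (psit_cont : continuous2 psit) (psitt_cont : continuous2 psitt)
  (psi_x : partial_x psi psix) (psi_t : partial_t psi psit) (psit_t : partial_t psit psitt).
Variable M : R.
Hypotheses (M_pos : 0 < M) (psi_supp : support_bounded_by psi M).

Lemma psit_supp x t : M <= Rabs x -> psit x t = 0.
Proof.
  intros Hx. apply (derivable_pt_lim_locally_zero (fun s => psi x s) t); [|apply psi_t].
  apply filter_forall. intros s. apply psi_supp. auto.
Qed.

Lemma psix_supp x t : M < Rabs x -> psix x t = 0.
Proof.
  intros Hx. apply (derivable_pt_lim_locally_zero (fun y => psi y t) x); [|apply psi_x].
  assert (Hr : 0 < Rabs x - M) by lra.
  exists (mkposreal _ Hr). intros y Hy. apply psi_supp. left.
  change (Rabs (y - x) < Rabs x - M) in Hy.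
  pose proof (Rabs_triang (x - y) y) as Htri. rewrite Rabs_minus_sym in Hy.
  assert (E : x - y + y = x) by (change (@eq R (x - y + y) x); ring).
  rewrite E in Htri. lra.
Qed.

(* A box [-K, K] x [0, M] containing both fronts and the support of psi. *)
Let K := M + (Rabs ua * M + Rabs (ua - um) / mu) + (Rabs ua * M + Rabs (ua - up) / mu).

Local Notation X1 := (X_curve mu ua um).
Local Notation X2 := (X_curve mu ua up).
Local Notation ul := (u_side mu ua um).
Local Notation ur := (u_side mu ua up).
Local Notation left_int := (window_int psi (fun _ => - K) X1).
Local Notation right_int := (window_int psi X2 (fun _ => K)).
Local Notation left_rate := (window_rate psi psit ul (fun _ => - K) X1).
Local Notation right_rate := (window_rate psi psit ur X2 (fun _ => K)).

Lemma box_bounds t : 0 <= t <= M -> M <= K /\ - K <= X1 t /\ X1 t <= X2 t /\ X2 t <= K.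
Proof.
  intros Ht.
  pose proof (Rabs_X_curve_le um t M Ht) as H1. pose proof (Rabs_X_curve_le up t M Ht) as H2.
  apply Rabs_le_between in H1. apply Rabs_le_between in H2.
  assert (0 <= Rabs ua * M) by (apply Rmult_le_pos; [apply Rabs_pos|lra]).
  assert (Hdiv : forall c, 0 <= Rabs c / mu)
    by (intros; apply Rdiv_le_0_compat; [apply Rabs_pos|lra]).
  pose proof (Hdiv (ua - um)). pose proof (Hdiv (ua - up)). pose proof (X_curve_le t (proj1 Ht)).
  unfold K. repeat split; lra.
Qed.

Lemma psi_box_ends t : psi (- K) t = 0 /\ psi K t = 0.
Proof.
  pose proof (box_bounds 0 ltac:(lra)) as [HK _].
  split; apply psi_supp; left; [rewrite Rabs_left|rewrite Rabs_right]; lra.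
Qed.

Lemma window_int_at_M : left_int M = 0 /\ right_int M = 0.
Proof.
  split; apply is_RInt_unique, is_RInt_zero_inside; intros; apply psi_supp; right; lra.
Qed.

Lemma is_RInt_mass_at t : 0 <= t <= M ->
  is_RInt (fun x => sol_alpha mu ua am ap um up x t * psit x t
                    + sol_alpha mu ua am ap um up x t * sol_u mu ua am ap um up x t * psix x t)
    (- M) M (am * left_rate t + ap * right_rate t).
Proof.
  intros Ht. destruct (box_bounds t Ht) as (HK & H1 & H12 & H2).
  apply is_RInt_shrink with K; [lra| |].
  { intros x Hx. rewrite psit_supp, psix_supp by lra. ring. }
  apply is_RInt_gap with (b := X1 t) (c := X2 t) (g := fun x => am * (psit x t + ul t * psix x t))
    (h := fun x => ap * (psit x t + ur t * psix x t)); auto.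
  - intros x Hx. destruct (sol_left x t) as [-> ->]; [lra|]. ring.
  - intros x Hx. rewrite sol_vacuum by lra. ring.
  - intros x Hx. destruct (sol_right x t) as [-> ->]; [lra|lra|]. ring.
  - apply (is_RInt_scal (V := R_NormedModule)).
    apply (is_RInt_window_rate psi psix psit psix_cont psit_cont psi_x ul (fun _ => - K) X1 t).
  - apply (is_RInt_scal (V := R_NormedModule)).
    apply (is_RInt_window_rate psi psix psit psix_cont psit_cont psi_x ur X2 (fun _ => K) t).
Qed.

Lemma is_RInt_momentum_at t : 0 <= t <= M ->
  is_RInt (fun x => sol_alpha mu ua am ap um up x t * sol_u mu ua am ap um up x t * psit x t
                    + sol_alpha mu ua am ap um up x t * (sol_u mu ua am ap um up x t) ^ 2 * psix x t
                    + mu * sol_alpha mu ua am ap um up x t * (ua - sol_u mu ua am ap um up x t)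
                      * psi x t)
    (- M) M (am * (mu * (ua - ul t) * left_int t + ul t * left_rate t)
             + ap * (mu * (ua - ur t) * right_int t + ur t * right_rate t)).
Proof.
  intros Ht. destruct (box_bounds t Ht) as (HK & H1 & H12 & H2).
  apply is_RInt_shrink with K; [lra| |].
  { intros x Hx. rewrite psit_supp, psix_supp, psi_supp by lra. ring. }
  apply is_RInt_gap with (b := X1 t) (c := X2 t)
    (g := fun x => am * (mu * (ua - ul t) * psi x t + ul t * (psit x t + ul t * psix x t)))
    (h := fun x => ap * (mu * (ua - ur t) * psi x t + ur t * (psit x t + ur t * psix x t))); auto.
  - intros x Hx. destruct (sol_left x t) as [-> ->]; [lra|]. ring.
  - intros x Hx. rewrite sol_vacuum by lra. ring.
  - intros x Hx. destruct (sol_right x t) as [-> ->]; [lra|lra|]. ring.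
  - apply (is_RInt_scal (V := R_NormedModule)), (is_RInt_plus (V := R_NormedModule));
      apply (is_RInt_scal (V := R_NormedModule)).
    + exact (is_RInt_continuous2 psi t (- K) (X1 t) psi_cont).
    + apply (is_RInt_window_rate psi psix psit psix_cont psit_cont psi_x ul (fun _ => - K) X1 t).
  - apply (is_RInt_scal (V := R_NormedModule)), (is_RInt_plus (V := R_NormedModule));
      apply (is_RInt_scal (V := R_NormedModule)).
    + exact (is_RInt_continuous2 psi t (X2 t) K psi_cont).
    + apply (is_RInt_window_rate psi psix psit psix_cont psit_cont psi_x ur X2 (fun _ => K) t).
Qed.

Lemma is_RInt_riemann_data c d :
  is_RInt (fun x => riemann_data c d x * psi x 0) (- M) M (c * left_int 0 + d * right_int 0).
Proof.
  destruct (box_bounds 0 ltac:(lra)) as (HK & _).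
  unfold window_int. rewrite !X_curve_0.
  apply is_RInt_shrink with K; [lra| |].
  { intros x Hx. rewrite psi_supp by lra. ring. }
  apply is_RInt_gap with (b := 0) (c := 0) (g := fun x => c * psi x 0) (h := fun x => d * psi x 0);
    try lra.
  - intros x Hx. unfold riemann_data. destruct (Rlt_dec x 0); [reflexivity|lra].
  - intros x Hx. lra.
  - intros x Hx. unfold riemann_data. destruct (Rlt_dec x 0); [lra|reflexivity].
  - apply (is_RInt_scal (V := R_NormedModule)), is_RInt_continuous2, psi_cont.
  - apply (is_RInt_scal (V := R_NormedModule)), is_RInt_continuous2, psi_cont.
Qed.

Lemma left_window_balance t0 t1 :
  is_RInt left_rate t0 t1 (left_int t1 - left_int t0) /\
  is_RInt (fun t => mu * (ua - ul t) * left_int t + ul t * left_rate t) t0 t1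
    (ul t1 * left_int t1 - ul t0 * left_int t0).
Proof.
  assert (Hc : forall t : R, is_derive (fun _ => - K) t 0)
    by (intros; apply is_derive_Reals, derivable_pt_lim_const).
  assert (Ha : forall t, psi (- K) t * (0 - ul t) = 0)
    by (intros; rewrite (proj1 (psi_box_ends t)); ring).
  assert (Hb : forall t, psi (X1 t) t * (ul t - ul t) = 0) by (intros; ring).
  split.
  - apply is_RInt_window_rate_time with (psitt := psitt) (dv := fun t => mu * (ua - ul t))
      (da := fun _ => 0) (db := ul); auto using is_derive_X_curve, is_derive_u_side.
  - apply is_RInt_window_momentum_time with (psitt := psitt) (da := fun _ => 0) (db := ul);
      auto using is_derive_X_curve, is_derive_u_side, continuity_u_side_rate.
Qed.

Lemma right_window_balance t0 t1 :
  is_RInt right_rate t0 t1 (right_int t1 - right_int t0) /\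
  is_RInt (fun t => mu * (ua - ur t) * right_int t + ur t * right_rate t) t0 t1
    (ur t1 * right_int t1 - ur t0 * right_int t0).
Proof.
  assert (Hc : forall t : R, is_derive (fun _ => K) t 0)
    by (intros; apply is_derive_Reals, derivable_pt_lim_const).
  assert (Ha : forall t, psi (X2 t) t * (ur t - ur t) = 0) by (intros; ring).
  assert (Hb : forall t, psi K t * (0 - ur t) = 0)
    by (intros; rewrite (proj2 (psi_box_ends t)); ring).
  split.
  - apply is_RInt_window_rate_time with (psitt := psitt) (dv := fun t => mu * (ua - ur t))
      (da := ur) (db := fun _ => 0); auto using is_derive_X_curve, is_derive_u_side.
  - apply is_RInt_window_momentum_time with (psitt := psitt) (da := ur) (db := fun _ => 0);
      auto using is_derive_X_curve, is_derive_u_side, continuity_u_side_rate.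
Qed.

Lemma weak_mass_balance :
  exists I1,
    has_int (fun x => riemann_data am ap x * psi x 0) (- M) M I1 /\
    has_iint (fun x t => sol_alpha mu ua am ap um up x t * psit x t
                         + sol_alpha mu ua am ap um up x t * sol_u mu ua am ap um up x t * psix x t)
      M (- I1).
Proof.
  exists (am * left_int 0 + ap * right_int 0). split.
  - apply has_int_of_is_RInt, is_RInt_riemann_data.
  - exists (fun t => am * left_rate t + ap * right_rate t). split.
    + intros t Ht. apply has_int_of_is_RInt, is_RInt_mass_at, Ht.
    + apply has_int_of_is_RInt.
      replace (- (am * left_int 0 + ap * right_int 0))
        with (am * (left_int M - left_int 0) + ap * (right_int M - right_int 0))
        by (destruct window_int_at_M as [-> ->]; ring).
      apply (is_RInt_plus (V := R_NormedModule)); apply (is_RInt_scal (V := R_NormedModule)).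
      * apply left_window_balance.
      * apply right_window_balance.
Qed.

Lemma weak_momentum_balance :
  exists I2,
    has_int (fun x => riemann_data am ap x * riemann_data um up x * psi x 0) (- M) M I2 /\
    has_iint (fun x t => sol_alpha mu ua am ap um up x t * sol_u mu ua am ap um up x t * psit x t
                         + sol_alpha mu ua am ap um up x t * (sol_u mu ua am ap um up x t) ^ 2
                           * psix x t
                         + mu * sol_alpha mu ua am ap um up x t * (ua - sol_u mu ua am ap um up x t)
                           * psi x t)
      M (- I2).
Proof.
  exists (am * um * left_int 0 + ap * up * right_int 0). split.
  - apply has_int_of_is_RInt.
    apply is_RInt_ext with (fun x => riemann_data (am * um) (ap * up) x * psi x 0).
    + intros x _. rewrite riemann_data_mult. reflexivity.
    + apply is_RInt_riemann_data.
  - exists (fun t => am * (mu * (ua - ul t) * left_int t + ul t * left_rate t)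
                     + ap * (mu * (ua - ur t) * right_int t + ur t * right_rate t)). split.
    + intros t Ht. apply has_int_of_is_RInt, is_RInt_momentum_at, Ht.
    + apply has_int_of_is_RInt.
      replace (- (am * um * left_int 0 + ap * up * right_int 0))
        with (am * (ul M * left_int M - ul 0 * left_int 0)
              + ap * (ur M * right_int M - ur 0 * right_int 0))
        by (destruct window_int_at_M as [-> ->]; rewrite !u_side_0; ring).
      apply (is_RInt_plus (V := R_NormedModule)); apply (is_RInt_scal (V := R_NormedModule)).
      * apply left_window_balance.
      * apply right_window_balance.
Qed.

End WeakForm.

End Solution.

Theorem mainTheorem11 (mu ua am ap um up : R)
  (Hmu : 0 < mu) (Ham : 0 <= am) (Hap : 0 <= ap) (Hu : um < up) :
  weak_solution mu ua
    (sol_alpha mu ua am ap um up) (sol_u mu ua am ap um up)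
    (riemann_data am ap) (riemann_data um up).
Proof.
  intros psi psix psit [Hsmooth _] Hx Ht M HM Hsupp.
  destruct (smooth2_regularity psi psix psit Hsmooth Hx Ht)
    as (Hc & Hcx & Hct & psitt & Htt & Hctt).
  split.
  - apply weak_mass_balance with psitt; auto.
  - apply weak_momentum_balance with psitt; auto.
Qed.
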